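(* Let $\mathcal{C}$ be a finite set of classes and let $(\ell_\star, \ell_a, \ell_b)$ be a random tuple of $\mathcal{C}$-valued labels ($\ell_\star$ the oracle label) such that for every $\mathcal{C}$-valued random variable $\ell_\times$ with $\ell_\times \ne \ell_\star$ almost surely, $\mathbb{P}(\ell_b = \ell_\star \mid \ell_a \ne \ell_\star) \ge \mathbb{P}(\ell_b = \ell_\times \mid \ell_a \ne \ell_\star)$. Let $(\ell_\star^{(n)}, \ell_a^{(n)}, \ell_b^{(n)})$, $n = 1, \dots, N$, be $N$ independent copies of this tuple, and let $\mathbb{P}^{(N)}(\ell_a = \ell_b) = \frac{1}{N}\sum_{n=1}^N [\ell_a^{(n)} = \ell_b^{(n)}]$. Then for every $t_l > 0$, with probability at least $1 - \delta_l$ where $\delta_l = \exp(-2 N t_l^2)$, $$\mathbb{P}^{(N)}(\ell_a = \ell_b) \le t_l + \mathbb{P}(\ell_b = \ell_\star).$$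
   Context: $[\cdot]$ denotes the Iverson bracket. Conditional probabilities given an event of probability zero are taken to be $0$. *)

From mathcomp Require Import all_boot all_order all_algebra.
From mathcomp Require Import all_classical all_reals all_analysis.
Set Implicit Arguments. Unset Strict Implicit. Unset Printing Implicit Defensive.
Import Order.TTheory GRing.Theory Num.Theory.
Local Open Scope ring_scope.

Section Prob.
Variables (R : realType) (Omega : finType).

Definition is_distr (P : Omega -> R) :=
  (forall w, 0 <= P w) /\ \sum_(w : Omega) P w = 1.

Definition prob (P : Omega -> R) (A : pred Omega) : R :=
  \sum_(w : Omega | A w) P w.

Definition cond_prob (P : Omega -> R) (A B : pred Omega) : R :=
  if prob P B == 0 then 0 else prob P (predI A B) / prob P B.

(* law of N independent copies: product distribution on Omega^N *)
Definition prod_distr (N : nat) (P : Omega -> R) : {ffun 'I_N -> Omega} -> R :=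
  fun ws => \prod_(n < N) P (ws n).

Definition empirical (N : nat) (A : pred Omega) (ws : {ffun 'I_N -> Omega}) : R :=
  (\sum_(n < N) ((A (ws n) : bool)%:R : R)) / N%:R.
End Prob.
Arguments prod_distr {R Omega} N P.
Arguments is_distr {R Omega} P.
Arguments prob {R Omega} P A.
Arguments cond_prob {R Omega} P A B.
Arguments empirical {R Omega N} A ws.

From mathcomp Require Import all_boot all_order all_algebra.
From mathcomp Require Import all_classical all_reals all_analysis.
From mathcomp Require Import ring lra.
Import Order.TTheory GRing.Theory Num.Theory.
Import numFieldNormedType.Exports.
Set Implicit Arguments. Unset Strict Implicit.
Local Open Scope ring_scope.

(* Where a is right, a = b exactly when b is right; where a is wrong, b agrees
   with a no more often than with the oracle, by the hypothesis applied to the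
   labelling equal to a where a is wrong. Hence P(a = b) <= P(b = oracle), and
   the claim follows from the one-sided Hoeffding bound for the empirical
   frequency of {a = b}: the Chernoff method with s = 4t, together with
   Hoeffding's lemma (1 - q + q e^s) e^(-sq) <= e^(s^2/8). *)

Section HoeffdingLemma.
Variable R : realType.

Lemma ger0_is_derive_le (f df : R -> R) (a b : R) :
  (forall x, is_derive x (1 : R) f (df x)) -> (forall x, a <= x <= b -> 0 <= df x) ->
  a <= b -> f a <= f b.
Proof.
move=> fdf df_ge0 ab.
have [c cab fab] : exists2 c, c \in `[a, b] & f b - f a = df c * (b - a).
  apply: MVT_segment => //; apply: continuous_subspaceT => x.
  by apply/differentiable_continuous/derivable1_diffP; exact: ex_derive.
by rewrite -subr_ge0 fab mulr_ge0 ?subr_ge0 // df_ge0 // -in_itv.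
Qed.

Definition bernoulli_mgf (q y : R) : R := 1 - q + q * expR y.

Lemma bernoulli_mgf_gt0 (q y : R) : 0 <= q <= 1 -> 0 < bernoulli_mgf q y.
Proof.
move=> /andP[q_ge0 q_le1]; have ey_gt0 := expR_gt0 y.
have [->|q_neq1] := eqVneq q 1; first by rewrite /bernoulli_mgf subrr add0r mul1r.
have : q < 1 by rewrite lt_neqAle q_neq1.
rewrite /bernoulli_mgf; nra.
Qed.

Lemma bernoulli_log_mgf_slope_le (q y : R) : 0 <= q <= 1 -> 0 <= y ->
  q * expR y / bernoulli_mgf q y <= q + y / 4.
Proof.
move=> q01 y_ge0.
pose f x := q + x / 4 - q * expR x / bernoulli_mgf q x.
pose df x := (1 - q - q * expR x) ^+ 2 / (4 * bernoulli_mgf q x ^+ 2).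
have fdf x : is_derive x (1 : R) f (df x).
  have mgf_neq0 := lt0r_neq0 (bernoulli_mgf_gt0 x q01).
  rewrite /f /df; apply: is_derive_eq.
  by rewrite /GRing.scale /= /bernoulli_mgf; field.
have := ger0_is_derive_le fdf _ y_ge0.
rewrite /f /bernoulli_mgf expR0 mulr1 subrK divr1 mul0r addr0 subrr subr_ge0.
by apply=> x _; rewrite /df divr_ge0 ?sqr_ge0 // mulr_ge0 // sqr_ge0.
Qed.

Lemma bernoulli_mgf_le (q s : R) : 0 <= q <= 1 -> 0 <= s ->
  bernoulli_mgf q s * expR (- (s * q)) <= expR (s ^+ 2 / 8).
Proof.
move=> q01 s_ge0.
pose e x := expR (- (x ^+ 2 / 8 + x * q)).
pose g x := - (bernoulli_mgf q x * e x).
pose dg x := e x * bernoulli_mgf q x * (q + x / 4 - q * expR x / bernoulli_mgf q x).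
have gdg x : is_derive x (1 : R) g (dg x).
  have mgf_neq0 := lt0r_neq0 (bernoulli_mgf_gt0 x q01).
  rewrite /g /dg /e; apply: is_derive_eq.
  by rewrite /GRing.scale /=; field.
have := ger0_is_derive_le gdg _ s_ge0.
rewrite /g /e /bernoulli_mgf expR0 mulr1 subrK expr0n /= !mul0r add0r oppr0 expR0.
rewrite mulr1 lerN2 opprD expRD mulrA [expR (- (_ / 8))]expRN mulrAC.
rewrite ler_pdivrMr ?expR_gt0 // mul1r.
apply=> x /andP[x_ge0 _].
rewrite /dg mulr_ge0 ?subr_ge0 ?bernoulli_log_mgf_slope_le //.
by rewrite mulr_ge0 ?expR_ge0 // ltW // bernoulli_mgf_gt0.
Qed.

End HoeffdingLemma.

Section FiniteProbability.
Variables (R : realType) (Omega : finType) (P : Omega -> R).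

Lemma prob_ge0 (A : pred Omega) : (forall w, 0 <= P w) -> 0 <= prob P A.
Proof. by move=> P_ge0; rewrite sumr_ge0. Qed.

Lemma le_prob (A B : pred Omega) : (forall w, 0 <= P w) ->
  (forall w, A w -> B w) -> prob P A <= prob P B.
Proof.
move=> P_ge0 AB; rewrite /prob [leRHS](bigID A) /= ler_wpDr ?sumr_ge0 //.
rewrite le_eqVlt (@eq_bigl _ _ _ _ _ _ A) ?eqxx // => w.
by case: (boolP (A w)) => [/AB ->|]; rewrite ?andbF.
Qed.

Lemma prob_predC (A : pred Omega) : is_distr P -> prob P (predC A) = 1 - prob P A.
Proof. by move=> [_ P1]; rewrite -P1 (bigID A) /= addrC addrK. Qed.

Lemma markov_prob_le (f : Omega -> R) (A : pred Omega) : (forall w, 0 <= P w) ->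
  (forall w, 0 <= f w) -> (forall w, A w -> 1 <= f w) ->
  prob P A <= \sum_w P w * f w.
Proof.
move=> P_ge0 f_ge0 Af_ge1; rewrite /prob [leRHS](bigID A) /=.
rewrite ler_wpDr ?sumr_ge0 // => [w _|]; first exact: mulr_ge0.
by apply: ler_sum => w /Af_ge1 f_ge1; rewrite ler_peMr.
Qed.

Lemma sum_mul_expR_indicator (A : pred Omega) (s : R) : is_distr P ->
  \sum_w P w * expR (s * (A w)%:R) = bernoulli_mgf (prob P A) s.
Proof.
move=> hP; rewrite /bernoulli_mgf -prob_predC // (bigID A) /= addrC mulr_suml.
by congr (_ + _); apply: eq_bigr => w Aw;
  rewrite ?(negbTE Aw) ?Aw /= ?mulr0 ?mulr1 ?expR0 ?mulr1.
Qed.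

End FiniteProbability.

Lemma sum_ffun_prod (R : comPzSemiRingType) (T : finType) (N : nat) (F : T -> R) :
  \sum_(ws : {ffun 'I_N -> T}) \prod_(n < N) F (ws n) = (\sum_w F w) ^+ N.
Proof. by rewrite -[in RHS](card_ord N) -prodr_const bigA_distr_bigA. Qed.

Section ProductDistribution.
Variables (R : realType) (Omega : finType) (P : Omega -> R) (N : nat).

Lemma sum_prod_distr_mul_prod (f : Omega -> R) :
  \sum_ws prod_distr N P ws * \prod_(n < N) f (ws n) = (\sum_w P w * f w) ^+ N.
Proof.
by rewrite -sum_ffun_prod; apply: eq_bigr => ws _; rewrite /prod_distr -big_split.
Qed.

Lemma prod_distr_is_distr : is_distr P -> is_distr (prod_distr N P).
Proof.
move=> [P_ge0 P1]; split=> [ws|]; first exact: prodr_ge0.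
by rewrite /prod_distr sum_ffun_prod P1 expr1n.
Qed.

End ProductDistribution.

Section Hoeffding.
Variables (R : realType) (Omega : finType) (P : Omega -> R) (N : nat).
Hypothesis hP : is_distr P.
Hypothesis N_gt0 : (0 < N)%N.

Theorem hoeffding_empirical (A : pred Omega) (t : R) : 0 <= t ->
  prob (prod_distr N P) (fun ws => prob P A + t < empirical A ws)
    <= expR (- (2 * N%:R * t ^+ 2)).
Proof.
move=> t_ge0; have [P_ge0 _] := hP; have Nr_gt0 : (0 : R) < N%:R by rewrite ltr0n.
set q := prob P A.
(* s = 4 t minimises the Chernoff exponent s^2/8 - s t. *)
pose s := 4 * t.
pose e w := expR (s * ((A w)%:R - (q + t))).
have e_mean : \sum_w P w * e w <= expR (- (2 * t ^+ 2)).
  under eq_bigr do rewrite /e mulrBr expRD mulrA.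
  rewrite -mulr_suml sum_mul_expR_indicator // -/q.
  rewrite mulrDr opprD expRD mulrA.
  rewrite (le_trans (ler_wpM2r (expR_ge0 _) (bernoulli_mgf_le _ _))) //.
  - by rewrite prob_ge0 //= -subr_ge0 -(prob_predC A hP) prob_ge0.
  - by rewrite /s mulr_ge0.
  by rewrite -expRD /s (_ : _ + _ = - (2 * t ^+ 2)) //; field.
pose chernoff (ws : {ffun 'I_N -> Omega}) := \prod_(n < N) e (ws n).
apply: (le_trans (markov_prob_le (f := chernoff) _ _ _)).
- exact: (prod_distr_is_distr N hP).1.
- by move=> ws; rewrite prodr_ge0 // => n _; rewrite expR_ge0.
- move=> ws; rewrite /chernoff /empirical ltr_pdivlMr // => emp_gt.
  rewrite -expR_sum -[leLHS]expR0 ler_expR -mulr_sumr sumrB sumr_const card_ord.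
  by rewrite mulr_ge0 ?subr_ge0 /s ?mulr_ge0 // -mulr_natr ltW.
rewrite sum_prod_distr_mul_prod.
rewrite (le_trans (lerXn2r _ _ _ e_mean)) ?nnegrE ?sumr_ge0 ?expR_ge0 //.
- by move=> w _; rewrite mulr_ge0 ?expR_ge0.
- by rewrite -expRM_natl mulrN mulrA [N%:R * 2]mulrC.
Qed.

End Hoeffding.

Lemma cond_probE (R : realType) (Omega : finType) (P : Omega -> R) (A B : pred Omega) :
  prob P B != 0 -> cond_prob P A B = prob P (predI A B) / prob P B.
Proof. by rewrite /cond_prob => /negbTE ->. Qed.

Section Agreement.
Variables (R : realType) (C Omega : finType) (P : Omega -> R) (ls la lb : Omega -> C).
Hypothesis P_ge0 : forall w, 0 <= P w.

Local Notation wrong := (fun w => la w != ls w).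

Hypothesis oracle_best : forall lx : Omega -> C,
  (forall w, 0 < P w -> lx w != ls w) ->
  cond_prob P (fun w => lb w == lx w) wrong <= cond_prob P (fun w => lb w == ls w) wrong.

Lemma prob_agree_wrong_le :
  prob P (predI (fun w => la w == lb w) wrong)
    <= prob P (predI (fun w => lb w == ls w) wrong).
Proof.
have [wrong0|wrong_neq0] := eqVneq (prob P wrong) 0.
  apply: (le_trans (le_prob P_ge0 (B := wrong) _)); first by move=> w /andP[].
  by rewrite wrong0 prob_ge0.
have [w0 wrong_w0|] := pickP wrong; last first.
  by move=> wrong_none; move: wrong_neq0; rewrite /prob big_pred0 ?eqxx.
(* Off [wrong], ls w = la w, and one of the distinct labels la w0, ls w0 differs from it. *)
pose lx w := if wrong w then la w else if la w0 != ls w then la w0 else ls w0.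
have lx_wrong w : lx w != ls w.
  rewrite /lx; case: ifP => // _; case: ifP => // /negbFE/eqP <-.
  by rewrite eq_sym.
have := oracle_best (fun w _ => lx_wrong w).
have wrong_gt0 : 0 < prob P wrong by rewrite lt_def wrong_neq0 prob_ge0.
rewrite !cond_probE // ler_pM2r ?invr_gt0 //; apply: le_trans.
rewrite le_eqVlt /prob (@eq_bigl _ _ _ _ _ _ (predI (fun w => lb w == lx w) wrong)) ?eqxx //.
by move=> w /=; rewrite /lx; case: (wrong w); rewrite ?andbT ?andbF // eq_sym.
Qed.

Lemma prob_agree_le_prob_correct :
  prob P (fun w => la w == lb w) <= prob P (fun w => lb w == ls w).
Proof.
rewrite /prob (bigID wrong) [leRHS](bigID wrong) /=.
apply: lerD; first exact: prob_agree_wrong_le.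
rewrite le_eqVlt (@eq_bigl _ _ _ _ _ _ (fun w => (lb w == ls w) && ~~ wrong w)) ?eqxx //.
by move=> w; rewrite /wrong negbK; case: (la w =P ls w) => [->|]; rewrite ?andbT ?andbF // eq_sym.
Qed.

End Agreement.

Theorem theorem6 (R : realType) (C Omega : finType) (P : Omega -> R)
  (ls la lb : Omega -> C) (N : nat) (hN : (0 < N)%N)
  (hP : is_distr P)
  (hyp : forall lx : Omega -> C,
     (forall w, 0 < P w -> lx w != ls w) ->
     cond_prob P (fun w => lb w == lx w) (fun w => la w != ls w)
       <= cond_prob P (fun w => lb w == ls w) (fun w => la w != ls w))
  (t : R) (ht : 0 < t) :
  1 - expR (- (2 * N%:R * t ^+ 2))
    <= prob (prod_distr N P)
         (fun ws => empirical (fun w => la w == lb w) ws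
                    <= t + prob P (fun w => lb w == ls w)).
Proof.
have [P_ge0 _] := hP.
have agree_le_correct := prob_agree_le_prob_correct P_ge0 hyp.
set A := fun w => la w == lb w in agree_le_correct *.
have tail := hoeffding_empirical hP hN A (ltW ht).
have [Q_ge0 _] := prod_distr_is_distr N hP.
rewrite (le_trans (lerB (lexx 1) tail)) // -prob_predC; last exact: prod_distr_is_distr.
apply: le_prob => // ws /=.
by rewrite -leNgt => /le_trans; apply; rewrite addrC lerD2l.
Qed.
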